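(* Let $r\ge2$, $\ell\ge1$, let $C=(w_1,\dots,w_{2\ell+1})$ be a semi-valid tuple in $\Omega_n$, and let $i$ and $1\le k\le\ell$ be such that $C$ is $(i,k)$-consecutive. If each of $C_{i,k,-1}$, $C_{i,k,0}$, $C_{i,k,1}$ is semi-valid, then $$|H_n^{(r)}(C)|\ge\min\{|H_n^{(r)}(C_{i,k,-1})|,|H_n^{(r)}(C_{i,k,1})|\}.$$ Moreover, this inequality is strict if $r\ge3$ and $n\ge3r-5$.
   Context: $\Omega_n=\{v_0,\dots,v_{n-1}\}$ with cyclic order $v_0<\dots<v_{n-1}<v_0$, indices of $v$ mod $n$. For distinct vertices $u,w$, $(u,w)$ is the set of vertices strictly between $u$ and $w$ moving clockwise from $u$ to $w$, and $[u,w]=(u,w)\cup\{u,w\}$. A tuple $C=(w_1,\dots,w_{2\ell+1})$ of distinct vertices is semi-valid if $w_1<w_3<\dots<w_{2\ell+1}<w_2<w_4<\dots<w_{2\ell}<w_1$ in clockwise cyclic order; indices of the $w$'s are taken mod $2\ell+1$. $H_n^{(r)}(C)=\{e\in\binom{\Omega_n}{r}: e\cap[w_p,w_{p-1}]\neq\emptyset\ \forall p\in\{1,\dots,2\ell+1\}\}$. $C$ is $(i,k)$-consecutive if there is $j$ with $w_{i+2s}=v_{j+s}$ for all $0\le s<k$. In that case, for an integer $m$, $C_{i,k,m}=(w'_1,\dots,w'_{2\ell+1})$ is the tuple with $w'_{i+2s}=v_{j+s+m}$ for $0\le s<k$ and $w'_p=w_p$ for all other $p$ (so $C_{i,k,0}=C$).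 *)

From mathcomp Require Import all_boot all_order all_algebra.
Set Implicit Arguments. Unset Strict Implicit. Unset Printing Implicit Defensive.

(* Vertices of Omega_n are 'I_n (v_a is the ordinal with value a mod n);
   a (2l+1)-tuple C = (w_1,...,w_{2l+1}) is a function 'I_(2l+1) -> 'I_n,
   where the paper's w_p is  w (idx l p), i.e. position p mod (2l+1). *)

Definition idx (l p : nat) : 'I_(l.*2.+1) := inord (p %% l.*2.+1).

Section Defs.
Variables (n l : nat).
Notation tupleT := ('I_(l.*2.+1) -> 'I_n).

Definition wat (w : tupleT) (p : nat) : 'I_n := w (idx l p).

(* cyclic clockwise order a_1 < a_2 < ... < a_m < a_1 of distinct vertices:
   some rotation of the list is strictly increasing *)
Definition cyclic_ordered (s : seq nat) : bool :=
  uniq s && has (fun q => sorted ltn (rot q s)) (iota 0 (size s)).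

Definition semi_valid (w : tupleT) : bool :=
  cyclic_ordered
    ([seq val (wat w (2 * j + 1)) | j <- iota 0 l.+1] ++
     [seq val (wat w (2 * j + 2)) | j <- iota 0 l]).

Definition cdist (u x : 'I_n) : nat := (x + n - u) %% n.

Definition open_int (u v : 'I_n) : {set 'I_n} :=
  [set x : 'I_n | (0 < cdist u x) && (cdist u x < cdist u v)].

Definition closed_int (u v : 'I_n) : {set 'I_n} :=
  open_int u v :|: [set u; v].

Definition H (r : nat) (w : tupleT) : {set {set 'I_n}} :=
  [set e : {set 'I_n} | (#|e| == r) &&
     [forall p : 'I_(l.*2.+1),
        e :&: closed_int (wat w p) (wat w (p + l.*2)) != set0]].

Definition consecutive_at (w : tupleT) (i k j : nat) : Prop :=
  forall s, s < k -> val (wat w (i + 2 * s)) = (j + s) %% n.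

Definition shiftC (w : tupleT) (i k j : nat) (m : int) : tupleT :=
  fun p => match [pick s : 'I_k | p == idx l (i + 2 * s)] with
           | Some s => insubd (w p) `|(((j + s)%:Z + m) %% n%:Z)%Z|%N
           | None => w p
           end.

End Defs.

(* Measure vertices by their clockwise distance from v_{j-1}.  Semi-validity of the three
   shifts puts the block of C at distances 1, ..., k and every other vertex of C beyond
   k+1.  Turning the arc of distances 0, ..., k+1 one step clockwise carries C_{i,k,-1} to C
   and C to C_{i,k,1}, and preserves membership in H for sets avoiding v_{j+k}.  It therefore
   injects H(C_{i,k,-1}) \ H(C) into H(C) \ H(C_{i,k,1}) with images avoiding v_{j-1}, and
   its inverse injects H(C_{i,k,1}) \ H(C) into H(C) \ H(C_{i,k,-1}) with images avoiding
   v_{j+k}; hence |H(C_{i,k,-1})| + |H(C_{i,k,1})| <= 2 |H(C)|.  When r >= 3 and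
   n >= 3r-5, an r-set through v_{j-1}, v_j, w_{i+2l+2} or through v_{j+k}, v_j, w_{i+2l}
   lies in H(C) but outside these images, making the inequality strict. *)

From mathcomp Require Import all_boot all_order all_algebra.
From mathcomp Require Import zify ring.
From Stdlib Require Import FunctionalExtensionality.
Set Implicit Arguments. Unset Strict Implicit. Unset Printing Implicit Defensive.

Definition cw n a b := if a <= b then b - a else b + n - a.

Lemma cw_recenter n o u x : o < n -> u < n -> x < n -> cw n u x = cw n (cw n o u) (cw n o x).
Proof. rewrite /cw => *; repeat case: ifP; lia. Qed.

Lemma modn_lt_double a n : a < n + n -> a %% n = if a < n then a else a - n.
Proof.
move=> a_lt; case: (ltnP a n) => a_n; first by rewrite modn_small.
have -> : a = (a - n) + n by lia.
by rewrite modnDr modn_small; lia.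
Qed.

Lemma cdist_cw n (u x : 'I_n) : cdist u x = cw n u x.
Proof.
rewrite /cdist /cw; case: leqP => ux; have xn := ltn_ord x.
  have -> : x + n - u = (x - u) + n by lia.
  by rewrite modnDr modn_small //; lia.
by rewrite modn_small //; lia.
Qed.

Lemma in_closed_int n (u v x : 'I_n) : (x \in closed_int u v) = (cdist u x <= cdist u v).
Proof.
rewrite /closed_int /open_int !inE !cdist_cw /cw.
have := ltn_ord u; have := ltn_ord v; have := ltn_ord x.
case: (eqVneq x u) => [->|xu]; first by rewrite leqnn subnn orbT.
case: (eqVneq x v) => [->|xv]; first by rewrite leqnn /= orbT.
have /eqP xu' : (x : nat) != u by []; have /eqP xv' : (x : nat) != v by [].
rewrite /= orbF; repeat case: ifP; lia.
Qed.

Definition rot_arc k t := if t <= k then t.+1 else if t == k.+1 then 0 else t.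

Lemma rot_arc_small k t : t <= k -> rot_arc k t = t.+1.
Proof. by rewrite /rot_arc => ->. Qed.

Lemma rot_arc_large k t : k.+1 < t -> rot_arc k t = t.
Proof. by rewrite /rot_arc => kt; rewrite ifF ?ifF //; lia. Qed.

Lemma cw_le_rot_arc n k a b x : k.+1 < n -> a < n -> b < n -> x < n ->
  a != k.+1 -> b != k.+1 -> x != k.+1 ->
  (cw n a x <= cw n a b) = (cw n (rot_arc k a) (rot_arc k x) <= cw n (rot_arc k a) (rot_arc k b)).
Proof. rewrite /cw /rot_arc => *; repeat case: ifP; lia. Qed.

Lemma cw_le_rot_ends n k a b x : 1 <= k -> k.+1 < n -> a < n -> b < n -> x < n ->
  [|| (a <= k.-1) && (k.+1 < b), (k.+1 < a) && (b <= k.-1) | (k.+1 < a) && (k.+1 < b)] ->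
  cw n a x <= cw n a b ->
  (cw n (rot_arc k a) x <= cw n (rot_arc k a) (rot_arc k b))
  || (cw n (rot_arc k a) k.+1 <= cw n (rot_arc k a) (rot_arc k b)).
Proof.
move=> k1 kn an bn xn /or3P [] /andP [ha hb].
- rewrite rot_arc_small ?(rot_arc_large hb) /cw; last lia.
  by repeat case: ifP; lia.
- rewrite (rot_arc_large ha) rot_arc_small /cw; last lia.
  by repeat case: ifP; lia.
- by rewrite (rot_arc_large ha) (rot_arc_large hb) => ->.
Qed.

Lemma cw_le_unrot_ends n k a b x : 1 <= k -> k.+1 < n -> a < n -> b < n -> x < n ->
  [|| (1 <= a <= k) && (k.+1 < b), (k.+1 < a) && (1 <= b <= k) | (k.+1 < a) && (k.+1 < b)] ->
  cw n (rot_arc k a) x <= cw n (rot_arc k a) (rot_arc k b) ->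
  (cw n a x <= cw n a b) || (cw n a 0 <= cw n a b).
Proof.
move=> k1 kn an bn xn /or3P [] /andP [ha hb].
- rewrite rot_arc_small ?(rot_arc_large hb) /cw; last lia.
  by repeat case: ifP; lia.
- rewrite (rot_arc_large ha) rot_arc_small /cw; last lia.
  by repeat case: ifP; lia.
- by rewrite (rot_arc_large ha) (rot_arc_large hb) => ->.
Qed.

Lemma cw_le_cover3 n u v b : u < n -> v < n -> b < n ->
  [|| u == 1, (u <= b) && (b <= v) | v < u] ->
  [|| cw n u 0 <= cw n u v, cw n u 1 <= cw n u v | cw n u b <= cw n u v].
Proof. rewrite /cw; repeat case: ifP; lia. Qed.

Lemma cw_le_cover2 n u v a : u < n -> v < n -> a < n -> 1 <= v ->
  ((u <= a) && (a <= v)) || ((v < u) && (1 < u)) ->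
  (cw n u 1 <= cw n u v) || (cw n u a <= cw n u v).
Proof. rewrite /cw; repeat case: ifP; lia. Qed.

Lemma ltn_chain (f : nat -> nat) L t t' : (forall u, u.+1 < L -> f u < f u.+1) ->
  t < t' -> t' < L -> f t < f t'.
Proof.
move=> f_step; elim: t' => // t' IH; rewrite ltnS leq_eqVlt => /orP [/eqP -> | tt'] t'L.
  exact: f_step.
exact: ltn_trans (IH tt' (ltnW t'L)) (f_step _ t'L).
Qed.

Lemma leq_chain (f : nat -> nat) L t t' : (forall u, u.+1 < L -> f u < f u.+1) ->
  t <= t' -> t' < L -> f t <= f t'.
Proof.
move=> f_step; rewrite leq_eqVlt => /orP [/eqP -> //| tt' t'L].
exact/ltnW/(ltn_chain f_step).
Qed.

(* A cyclically sorted periodic sequence, read from its first value at or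
   clockwise after [o], is increasing in clockwise distance from [o]. *)
Lemma cw_cyclic_sorted n L (y : nat -> nat) o : o < n ->
  (forall u, y (u + L) = y u) -> (forall u, y u < n) ->
  (forall t, t.+1 < L -> y t < y t.+1) ->
  exists c, forall t, t.+1 < L -> cw n o (y (c + t)) < cw n o (y (c + t.+1)).
Proof.
move=> on yper yn ystep.
have exP : exists t, (L <= t) || (o <= y t) by exists L; rewrite leqnn.
case: (ex_minnP exP) => c hc hmin; exists c.
have cL : c <= L by have := hmin L; rewrite leqnn => /(_ isT).
have below t : t < c -> y t < o.
  move=> tc; rewrite ltnNge; apply/negP => h.
  by have := hmin t; rewrite h orbT => /(_ isT); lia.
have above t : c <= t -> t < L -> o <= y t.
  move=> ct tL; have cL' : c < L by lia.
  move: hc; rewrite leqNgt cL' /= => hc.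
  exact: leq_trans hc (leq_chain ystep ct tL).
move=> t tL; rewrite /cw.
case: (ltnP (c + t.+1) L) => h1.
  have := ystep (c + t) (ltac:(lia)); have := above (c + t) (ltac:(lia)) (ltac:(lia)).
  have := above (c + t.+1) (ltac:(lia)) (ltac:(lia)).
  rewrite -addnS; repeat case: ifP; lia.
case: (eqVneq (c + t.+1) L) => h2.
  rewrite h2 -[L]add0n yper.
  have := below 0 (ltac:(lia)); have := above (c + t) (ltac:(lia)) (ltac:(lia)).
  have := yn (c + t); have := yn 0.
  repeat case: ifP; lia.
have -> : c + t = (c + t - L) + L by lia.
have -> : c + t.+1 = (c + t - L).+1 + L by lia.
rewrite !yper.
have := ystep (c + t - L) (ltac:(lia)).
have := below (c + t - L) (ltac:(lia)); have := below (c + t - L).+1 (ltac:(lia)).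
repeat case: ifP; lia.
Qed.

Lemma exists_set_between (T : finType) (A K : {set T}) r :
  A \subset K -> #|A| <= r -> r <= #|K| ->
  exists e : {set T}, [/\ A \subset e, e \subset K & #|e| = r].
Proof.
move Hm: (r - #|A|) => m; elim: m A Hm => [|m IH] A Hm sAK hA hK.
  by exists A; split => //; apply/eqP; rewrite eqn_leq hA; lia.
have : A \proper K by rewrite properEcard sAK /=; lia.
case/properP => _ [x xK xA].
have [||||e [h1 h2 h3]] := IH (x |: A); rewrite ?cardsU1 ?xA ?subUset ?sub1set ?xK //=; try lia.
by exists e; split => //; apply: subset_trans h1; apply: subsetUr.
Qed.

Lemma cards3_le (T : finType) (x y z : T) : #|[set x; y; z]| <= 3.
Proof. by rewrite cardsU cardsU1 !cards1; case: (x \notin _) => /=; lia. Qed.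

Lemma card_setD_balance (T : finType) (A B C : {set T}) :
  #|A| + #|C| + (#|B :\: C| + #|B :\: A|) = #|B| + #|B| + (#|A :\: B| + #|C :\: B|).
Proof.
have := cardsID B A; have := cardsID B C; have := cardsID A B; have := cardsID C B.
rewrite [C :&: B]setIC [A :&: B]setIC; lia.
Qed.

Lemma minn_card_leq (T : finType) (A B C : {set T}) :
  #|A :\: B| + #|C :\: B| <= #|B :\: C| + #|B :\: A| -> minn #|A| #|C| <= #|B|.
Proof. by have := card_setD_balance A B C; lia. Qed.

Lemma minn_card_ltn (T : finType) (A B C : {set T}) :
  #|A :\: B| + #|C :\: B| < #|B :\: C| + #|B :\: A| -> minn #|A| #|C| < #|B|.
Proof. by have := card_setD_balance A B C; lia. Qed.

Section Tuples.
Variables (n l : nat).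
Local Notation L := (l.*2.+1).
Local Notation tupleT := ('I_L -> 'I_n).

Lemma exists_step2 b p : exists2 q, q < L & p %% L = (b + 2 * q) %% L.
Proof.
have L_gt0 : 0 < L by [].
set X := p + (L - b %% L).
exists ((X * l.+1) %% L); first by rewrite ltn_pmod.
rewrite -modnDmr modnMmr modnDmr.
have e1 : 2 * (X * l.+1) = X * L + X by rewrite -mul2n; ring.
have -> : b + 2 * (X * l.+1) = (X + b %/ L) * L + p + L.
  rewrite e1 mulnDl.
  by have := divn_eq b L; have := ltn_pmod b L_gt0; rewrite /X; lia.
by rewrite -addnA modnMDl modnDr.
Qed.

Lemma idxE p : val (idx l p) = p %% L.
Proof. by rewrite /idx; apply: inordK; rewrite ltn_pmod. Qed.

Lemma wat_modL (C : tupleT) p q : p %% L = q %% L -> wat C p = wat C q.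
Proof. by rewrite /wat /idx => ->. Qed.

Lemma wat_ord (C : tupleT) (p : 'I_L) : wat C p = C p.
Proof. by rewrite /wat; congr C; apply: val_inj; rewrite idxE modn_small. Qed.

Lemma wat_odd_period (C : tupleT) u : wat C (2 * (u + L) + 1) = wat C (2 * u + 1).
Proof.
apply: wat_modL; have -> : 2 * (u + L) + 1 = 2 * L + (2 * u + 1) by lia.
by rewrite modnMDl.
Qed.

(* As 2 is invertible modulo 2l+1, the order w_1 < w_3 < ... < w_{2l+1} < w_2 < ... < w_{2l}
   lists w_{2u+1} for u < 2l+1. *)
Definition odd_seq (C : tupleT) := [seq val (wat C (2 * u + 1)) | u <- iota 0 L].

Lemma semi_valid_odd_seq (C : tupleT) : semi_valid C = cyclic_ordered (odd_seq C).
Proof.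
rewrite /semi_valid /odd_seq; congr cyclic_ordered.
have -> : L = l.+1 + l by rewrite -addnn; lia.
rewrite iotaD map_cat; congr (_ ++ _).
rewrite add0n -[l.+1]addn0 iotaDl -map_comp; apply: eq_map => u /=.
congr val; apply: wat_modL.
have -> : 2 * (l.+1 + (0 + u)) + 1 = (2 * u + 2) + L by rewrite -addnn; lia.
by rewrite modnDr.
Qed.

Lemma size_odd_seq (C : tupleT) : size (odd_seq C) = L.
Proof. by rewrite size_map size_iota. Qed.

Lemma nth_odd_seq (C : tupleT) u : u < L -> nth 0 (odd_seq C) u = val (wat C (2 * u + 1)).
Proof. by move=> uL; rewrite (nth_map 0) ?size_iota // nth_iota. Qed.

Lemma semi_valid_uniq (C : tupleT) : semi_valid C -> uniq (odd_seq C).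
Proof. by rewrite semi_valid_odd_seq => /andP []. Qed.

Lemma semi_valid_wat_inj (C : tupleT) p q :
  semi_valid C -> wat C p = wat C q -> p %% L = q %% L.
Proof.
move=> /semi_valid_uniq C_uniq.
have [up upL ep] := exists_step2 1 p; have [uq uqL eq] := exists_step2 1 q.
rewrite (wat_modL C ep) (wat_modL C eq) ep eq => eq_w.
have : nth 0 (odd_seq C) up = nth 0 (odd_seq C) uq.
  by rewrite !nth_odd_seq // !(addnC _ 1) eq_w.
by move/eqP; rewrite nth_uniq ?size_odd_seq // => /eqP ->.
Qed.

Lemma semi_valid_leq (C : tupleT) : semi_valid C -> L <= n.
Proof.
move=> /semi_valid_uniq C_uniq.
have := uniq_leq_size C_uniq (s2 := iota 0 n).
rewrite size_odd_seq size_iota; apply => x /mapP [u _ ->].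
by rewrite mem_iota /= ltn_ord.
Qed.

Lemma semi_valid_sorted (C : tupleT) : semi_valid C -> exists q0, forall t, t.+1 < L ->
  val (wat C (2 * (q0 + t) + 1)) < val (wat C (2 * (q0 + t.+1) + 1)).
Proof.
rewrite semi_valid_odd_seq /cyclic_ordered => /andP [_ /hasP [q0]].
rewrite size_odd_seq mem_iota /= => q0L sorted_rot; exists q0.
set y := fun u => val (wat C (2 * u + 1)).
have rotE : rot q0 (odd_seq C) = [seq y u | u <- iota q0 L].
  rewrite /odd_seq -map_rot /rot drop_iota take_iota add0n.
  have -> : minn q0 L = q0 by apply/minn_idPl; lia.
  have -> : iota q0 L = iota q0 (L - q0) ++ iota (q0 + (L - q0)) q0.
    by rewrite -iotaD; congr iota; lia.
  rewrite !map_cat; congr (_ ++ _).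
  have -> : q0 + (L - q0) = L + 0 by lia.
  by rewrite iotaDl -map_comp; apply: eq_map => u /=; rewrite /y [L + u]addnC wat_odd_period.
move: sorted_rot; rewrite rotE => /(sortedP 0) sorted_y t tL.
have := sorted_y t; rewrite size_map size_iota => /(_ tL).
by rewrite !(nth_map 0) ?size_iota // ?nth_iota //; lia.
Qed.

Lemma mem_H_arc r (C : tupleT) e p : e \in H r C ->
  exists2 x, x \in e & x \in closed_int (wat C p) (wat C (p + l.*2)).
Proof.
rewrite inE => /andP [_ /forallP /(_ (idx l p)) /set0Pn [x]].
rewrite inE => /andP [xe x_arc]; exists x => //.
rewrite (@wat_modL C p (idx l p)) ?(@wat_modL C (p + l.*2) (idx l p + l.*2)) //.
  by rewrite idxE modnDml.
by rewrite idxE modn_mod.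
Qed.

End Tuples.

Section Shift.
Variables (n l : nat) (w : 'I_(l.*2.+1) -> 'I_n) (i k j : nat).
Local Notation L := (l.*2.+1).
Local Notation shifted m := (shiftC w i k j m).

Hypotheses (k_ge1 : 1 <= k) (k_le_l : k <= l) (w_cons : consecutive_at w i k j)
  (w_sv : semi_valid w)
  (m1_sv : semi_valid (shifted (-1)%R)) (p1_sv : semi_valid (shifted 1%R)).

Definition in_block p := [exists s : 'I_k, p %% L == (i + 2 * s) %% L].

Lemma block_index_inj s s' : s < k -> s' < k ->
  (i + 2 * s) %% L = (i + 2 * s') %% L -> s = s'.
Proof. by move=> ? ? /eqP; rewrite eqn_modDl !modn_small; lia. Qed.

Lemma in_block_modL p q : p %% L = q %% L -> in_block p = in_block q.
Proof. by rewrite /in_block => ->. Qed.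

Lemma in_block_i : in_block i.
Proof. by apply/existsP; exists (Ordinal k_ge1); rewrite muln0 addn0. Qed.

Lemma in_block_opp p : in_block p -> ~~ in_block (p + l.*2).
Proof.
case/existsP=> s /eqP ps; apply/negP => /existsP [s' /eqP].
rewrite -modnDml ps modnDml -addnA => /eqP.
have := ltn_ord s; have := ltn_ord s' => s'k sk.
rewrite eqn_modDl (modn_small (m := 2 * s')); last lia.
by rewrite modn_lt_double; [case: ifP => /=; lia | lia].
Qed.

Lemma in_block_cases p : [|| in_block p && ~~ in_block (p + l.*2),
  ~~ in_block p && in_block (p + l.*2) | ~~ in_block p && ~~ in_block (p + l.*2)].
Proof.
have := @in_block_opp p.
by case: (in_block p); case: (in_block (p + l.*2)) => //= /(_ isT).
Qed.

Lemma n_gt0 : 0 < n.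
Proof. by have := ltn_ord (w ord0); apply: leq_ltn_trans. Qed.

(* The vertex v_{j-1}; adding n avoids the truncated subtraction when j = 0. *)
Definition origin := j + n - 1.
Definition vtx t : 'I_n := Ordinal (ltn_pmod (origin + t) n_gt0).
Definition pos x := cdist (vtx 0) x.

Lemma pos_lt x : pos x < n.
Proof. by rewrite /pos /cdist ltn_pmod // n_gt0. Qed.

Lemma pos_cw x : pos x = cw n (origin %% n) x.
Proof. by rewrite /pos cdist_cw /= addn0. Qed.

Lemma pos_vtx t : t < n -> pos (vtx t) = t.
Proof.
move=> tn; have := ltn_pmod origin n_gt0 => on.
rewrite pos_cw /= -(modnDml origin t n) (@modn_lt_double (origin %% n + t)); last lia.
by rewrite /cw; repeat case: ifP; lia.
Qed.

Lemma vtx_pos x : vtx (pos x) = x.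
Proof.
apply: val_inj => /=; rewrite pos_cw /cw -(modnDml origin).
have := ltn_pmod origin n_gt0; have := ltn_ord x.
case: ifP => h h1 h2.
  have -> : origin %% n + (x - origin %% n) = x by lia.
  by rewrite modn_small.
have -> : origin %% n + (x + n - origin %% n) = x + n by lia.
by rewrite modnDr modn_small.
Qed.

Lemma pos_inj : injective pos.
Proof. by move=> x y h; rewrite -(vtx_pos x) h vtx_pos. Qed.

Lemma cdist_pos u x : cdist u x = cw n (pos u) (pos x).
Proof. by rewrite !cdist_cw !pos_cw; apply: cw_recenter; rewrite ?ltn_pmod ?n_gt0. Qed.

Lemma wat_shifted_block (m : int) e s : m = (e%:Z - 1)%R -> e <= 2 -> s < k ->
  wat (shifted m) (i + 2 * s) = vtx (s + e).
Proof.
move=> -> e2 sk; apply: val_inj.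
rewrite /wat /shiftC; case: pickP => [s' /eqP s's | /(_ (Ordinal sk))]; last by rewrite eqxx.
have -> : s' = s :> nat.
  by apply: block_index_inj => //; move/(congr1 val): s's; rewrite !idxE.
have n0 := n_gt0.
rewrite val_insubd /= /origin.
have -> : ((j + s)%:Z + (e%:Z - 1) = (j + n - 1 + (s + e))%:Z - n%:Z)%R by lia.
rewrite -(modzDr ((j + n - 1 + (s + e))%:Z - n%:Z)%R n) GRing.subrK modz_nat absz_nat.
by rewrite ltn_pmod.
Qed.

Lemma wat_shifted_out (m : int) p : ~~ in_block p -> wat (shifted m) p = wat w p.
Proof.
move=> out; rewrite /wat /shiftC; case: pickP => [s' /eqP s'p | //].
case/negP: out; apply/existsP; exists s'; apply/eqP.
by move/(congr1 val): s'p; rewrite !idxE.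
Qed.

Lemma wat_block s : s < k -> wat w (i + 2 * s) = vtx (s + 1).
Proof.
move=> sk; apply: val_inj; rewrite w_cons //= /origin; have := n_gt0 => n0.
have -> : j + n - 1 + (s + 1) = (j + s) + n by lia.
by rewrite modnDr.
Qed.

Lemma shifted0 : shifted 0%R = w.
Proof.
apply: functional_extensionality => p.
rewrite -(wat_ord (shifted 0%R)) -(wat_ord w).
case: (boolP (in_block p)) => [/existsP [s /eqP ps] | out]; last exact: wat_shifted_out.
by rewrite !(wat_modL _ ps) (wat_shifted_block (e := 1)) // wat_block.
Qed.

Lemma k_succ_lt_n : k.+1 < n.
Proof. by have := semi_valid_leq w_sv; lia. Qed.

Lemma n_gt1 : 1 < n.
Proof. by have := k_succ_lt_n; lia. Qed.

(* [rot] fixes the vertices outside the arc from v_{j-1} to v_{j+k} and turns that arc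
   one step clockwise; it carries C_{i,k,-1} to C and C to C_{i,k,1}. *)
Definition rot x := if pos x <= k then vtx (pos x).+1 else if pos x == k.+1 then vtx 0 else x.

Lemma pos_rot x : pos (rot x) = rot_arc k (pos x).
Proof.
have := k_succ_lt_n; rewrite /rot /rot_arc; case: ifP => h kn.
  by rewrite pos_vtx; lia.
by case: ifP => // _; rewrite pos_vtx // n_gt0.
Qed.

Lemma rot_inj : injective rot.
Proof.
move=> x y /(congr1 pos); rewrite !pos_rot /rot_arc => eq_rot; apply: pos_inj.
by move: eq_rot; have := pos_lt x; have := pos_lt y; have := k_succ_lt_n; repeat case: ifP; lia.
Qed.

Lemma rot_top : rot (vtx k.+1) = vtx 0.
Proof. by have := k_succ_lt_n => kn; rewrite /rot pos_vtx // ifF ?eqxx //; lia. Qed.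

(* The positions 0, ..., k+1 are each occupied by a block vertex in one of the three
   semi-valid tuples C_{i,k,-1}, C, C_{i,k,1}, so no other vertex of C can lie there. *)
Lemma pos_out_block p : ~~ in_block p -> k.+1 < pos (wat w p).
Proof.
move=> out; rewrite ltnNge; apply/negP => small.
set t := pos (wat w p) in small.
have [e [s [e2 sk ts]]] : exists e s, [/\ e <= 2, s < k & t = s + e].
  case: (posnP t) => [t0|t_gt0]; first by exists 0, 0; rewrite t0.
  case: (leqP t k) => tk; first by exists 1, t.-1; split; lia.
  by exists 2, k.-1; split; lia.
have [m [me m_sv]] : exists m, m = (e%:Z - 1)%R /\ semi_valid (shifted m).
  case: e e2 {ts} => [|[|[|]]] // _.
  - by exists (-1)%R.
  - by exists 0%R; rewrite shifted0.
  - by exists 1%R.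
have := semi_valid_wat_inj (p := p) (q := i + 2 * s) m_sv.
rewrite wat_shifted_out // (wat_shifted_block me) // -ts /t vtx_pos => /(_ erefl) pq.
by case/negP: out; apply/existsP; exists (Ordinal sk); rewrite pq.
Qed.

Lemma pos_shifted (m : int) e p : m = (e%:Z - 1)%R -> e <= 2 ->
  (in_block p -> e <= pos (wat (shifted m) p) <= k.-1 + e) /\
  (~~ in_block p -> k.+1 < pos (wat (shifted m) p)).
Proof.
move=> me e2; split; last by move=> out; rewrite wat_shifted_out // pos_out_block.
case/existsP => s /eqP ps; have := ltn_ord s; have := k_succ_lt_n => kn sk.
by rewrite (wat_modL _ ps) (wat_shifted_block me) // pos_vtx; lia.
Qed.

Lemma wat_shifted_succ (m m' : int) e p : m = (e%:Z - 1)%R -> m' = (e.+1%:Z - 1)%R -> e <= 1 ->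
  wat (shifted m') p = rot (wat (shifted m) p) /\ pos (wat (shifted m) p) != k.+1.
Proof.
move=> me m'e e1; have := k_succ_lt_n => kn.
case: (boolP (in_block p)) => [/existsP [s /eqP ps] | out].
  have := ltn_ord s => sk.
  rewrite !(wat_modL _ ps) (wat_shifted_block me) ?(wat_shifted_block m'e) //; try lia.
  rewrite /rot pos_vtx; last lia.
  rewrite ifT; last lia.
  by split; [congr vtx; lia | apply/eqP; lia].
rewrite !wat_shifted_out //; have := pos_out_block out.
rewrite /rot => h; rewrite ifF; last lia.
by rewrite ifF; [split => //; apply/eqP; lia | lia].
Qed.

Lemma wat_rot_m1 p :
  wat w p = rot (wat (shifted (-1)%R) p) /\ pos (wat (shifted (-1)%R) p) != k.+1.
Proof. by have := @wat_shifted_succ (-1)%R 0%R 0 p erefl erefl isT; rewrite shifted0. Qed.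

Lemma wat_rot_p1 p : wat (shifted 1%R) p = rot (wat w p) /\ pos (wat w p) != k.+1.
Proof. by have := @wat_shifted_succ 0%R 1%R 1 p erefl erefl isT; rewrite shifted0. Qed.

Lemma mem_H_rot (C C' : 'I_L -> 'I_n) (e : {set 'I_n}) r :
  (forall p, wat C' p = rot (wat C p) /\ pos (wat C p) != k.+1) ->
  vtx k.+1 \notin e -> (e \in H r C) = (rot @: e \in H r C').
Proof.
move=> C'E top_e.
have pos_e x : x \in e -> pos x != k.+1.
  by move=> xe; apply/eqP => px; move: top_e; rewrite -px vtx_pos xe.
rewrite !inE card_imset; last exact: rot_inj.
congr andb; apply: eq_forallb => p.
have [-> pu] := C'E p; have [-> pv] := C'E (p + l.*2); have kn := k_succ_lt_n.
apply/idP/idP => /set0Pn [y]; rewrite inE => /andP [ye y_arc]; apply/set0Pn.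
  exists (rot y); rewrite inE imset_f //=.
  move: y_arc; rewrite !in_closed_int !cdist_pos !pos_rot -cw_le_rot_arc // ?pos_lt //.
  exact: pos_e.
case/imsetP: ye => x xe yx; exists x; rewrite inE xe /=.
move: y_arc; rewrite yx !in_closed_int !cdist_pos !pos_rot -cw_le_rot_arc // ?pos_lt //.
exact: pos_e.
Qed.

Lemma H_m1_top (e : {set 'I_n}) r :
  vtx k.+1 \in e -> e \in H r (shifted (-1)%R) -> e \in H r w.
Proof.
rewrite !inE => top_e /andP [-> /forallP e_meets] /=; apply/forallP => p.
move: (e_meets p) => /set0Pn [x]; rewrite inE => /andP [xe].
rewrite (proj1 (wat_rot_m1 p)) (proj1 (wat_rot_m1 (p + l.*2))) !in_closed_int !cdist_pos.
set a := pos (wat _ p); set b := pos (wat _ (p + l.*2)) => x_arc.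
have [blk_a out_a] := pos_shifted p (erefl : (-1)%R = (0%:Z - 1)%R) isT.
have [blk_b out_b] := pos_shifted (p + l.*2) (erefl : (-1)%R = (0%:Z - 1)%R) isT.
have ends : [|| (a <= k.-1) && (k.+1 < b), (k.+1 < a) && (b <= k.-1) | (k.+1 < a) && (k.+1 < b)].
  case/or3P: (in_block_cases p) => /andP [bp bq].
  - by have := blk_a bp; have := out_b bq; lia.
  - by have := out_a bp; have := blk_b bq; lia.
  - by have := out_a bp; have := out_b bq; lia.
case/orP: (cw_le_rot_ends k_ge1 k_succ_lt_n (pos_lt _) (pos_lt _) (pos_lt x) ends x_arc) => [x_arc' | top_arc].
  by apply/set0Pn; exists x; rewrite inE xe in_closed_int !cdist_pos !pos_rot.
apply/set0Pn; exists (vtx k.+1).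
by rewrite inE top_e in_closed_int !cdist_pos !pos_rot pos_vtx // k_succ_lt_n.
Qed.

Lemma H_p1_origin (e : {set 'I_n}) r :
  vtx 0 \in e -> e \in H r (shifted 1%R) -> e \in H r w.
Proof.
rewrite !inE => org_e /andP [-> /forallP e_meets] /=; apply/forallP => p.
move: (e_meets p) => /set0Pn [x]; rewrite inE => /andP [xe].
rewrite (proj1 (wat_rot_p1 p)) (proj1 (wat_rot_p1 (p + l.*2))) !in_closed_int !cdist_pos !pos_rot.
set a := pos (wat w p); set b := pos (wat w (p + l.*2)) => x_arc.
have [blk_a out_a] := pos_shifted p (erefl : 0%R = (1%:Z - 1)%R) isT.
have [blk_b out_b] := pos_shifted (p + l.*2) (erefl : 0%R = (1%:Z - 1)%R) isT.
rewrite shifted0 in blk_a out_a blk_b out_b.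
have ends : [|| (1 <= a <= k) && (k.+1 < b), (k.+1 < a) && (1 <= b <= k) | (k.+1 < a) && (k.+1 < b)].
  case/or3P: (in_block_cases p) => /andP [bp bq].
  - by have := blk_a bp; have := out_b bq; lia.
  - by have := out_a bp; have := blk_b bq; lia.
  - by have := out_a bp; have := out_b bq; lia.
case/orP: (cw_le_unrot_ends k_ge1 k_succ_lt_n (pos_lt _) (pos_lt _) (pos_lt x) ends x_arc) => [x_arc' | org_arc].
  by apply/set0Pn; exists x; rewrite inE xe in_closed_int !cdist_pos.
apply/set0Pn; exists (vtx 0).
by rewrite inE org_e in_closed_int !cdist_pos pos_vtx // n_gt0.
Qed.

Lemma card_setD_m1 r :
  #|H r (shifted (-1)%R) :\: H r w| <= #|H r w :\: H r (shifted 1%R)| /\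
  ((exists2 W, W \in H r w :\: H r (shifted 1%R) & vtx 0 \in W) ->
   #|H r (shifted (-1)%R) :\: H r w| < #|H r w :\: H r (shifted 1%R)|).
Proof.
set S := [set rot @: e | e : {set 'I_n} in H r (shifted (-1)%R) :\: H r w].
have cardS : #|S| = #|H r (shifted (-1)%R) :\: H r w|.
  by rewrite card_imset //; apply: imset_inj; exact: rot_inj.
have top_out e : e \in H r (shifted (-1)%R) :\: H r w -> vtx k.+1 \notin e.
  by rewrite in_setD => /andP [eB eA]; apply/negP => top_e; move: eB; rewrite (H_m1_top top_e eA).
have sub_S : S \subset H r w :\: H r (shifted 1%R).
  apply/subsetP => _ /imsetP [e ediff ->]; have top_e := top_out e ediff.
  move: ediff; rewrite !in_setD => /andP [eB eA].
  by rewrite -(mem_H_rot _ wat_rot_m1 top_e) eA andbT -(mem_H_rot _ wat_rot_p1 top_e) eB.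
have org_out W : W \in S -> vtx 0 \notin W.
  case/imsetP => e ediff ->; apply/imsetP => [[x xe /esym x0]].
  have x_top : x = vtx k.+1 by apply: rot_inj; rewrite x0 rot_top.
  by move: (top_out e ediff); rewrite -x_top xe.
rewrite -cardS; split; first exact: subset_leq_card.
case=> W WD W0; apply: proper_card; apply/properP; split => //; exists W => //.
by apply/negP => /org_out; rewrite W0.
Qed.

Lemma card_setD_p1 r :
  #|H r (shifted 1%R) :\: H r w| <= #|H r w :\: H r (shifted (-1)%R)| /\
  ((exists2 W, W \in H r w :\: H r (shifted (-1)%R) & vtx k.+1 \in W) ->
   #|H r (shifted 1%R) :\: H r w| < #|H r w :\: H r (shifted (-1)%R)|).
Proof.
pose unrot := invF rot_inj.
have rot_unrot (e : {set 'I_n}) : rot @: (unrot @: e) = e.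
  rewrite -imset_comp; apply/setP => x; apply/imsetP/idP.
    by case=> y ye /= ->; rewrite f_invF.
  by move=> xe; exists x => //=; rewrite f_invF.
set S := [set unrot @: e | e : {set 'I_n} in H r (shifted 1%R) :\: H r w].
have cardS : #|S| = #|H r (shifted 1%R) :\: H r w|.
  by rewrite card_imset //; apply: imset_inj; apply: (can_inj (f_invF rot_inj)).
have top_out e : e \in H r (shifted 1%R) :\: H r w -> vtx k.+1 \notin unrot @: e.
  rewrite in_setD => /andP [eB eA]; apply/negP => top_e.
  have := imset_f rot top_e; rewrite rot_unrot rot_top => org_e.
  by move: eB; rewrite (H_p1_origin org_e eA).
have sub_S : S \subset H r w :\: H r (shifted (-1)%R).
  apply/subsetP => _ /imsetP [e ediff ->]; have top_e := top_out e ediff.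
  move: ediff; rewrite !in_setD => /andP [eB eA].
  by rewrite (mem_H_rot _ wat_rot_m1 top_e) rot_unrot eB /= (mem_H_rot _ wat_rot_p1 top_e) rot_unrot eA.
have top_outS W : W \in S -> vtx k.+1 \notin W by case/imsetP => e ediff ->; apply: top_out.
rewrite -cardS; split; first exact: subset_leq_card.
case=> W WD Wtop; apply: proper_card; apply/properP; split => //; exists W => //.
by apply/negP => /top_outS; rewrite Wtop.
Qed.

Local Notation posb q := (pos (wat w (i + 2 * q))).

Lemma pos_ge1 p : 1 <= pos (wat w p).
Proof.
have [blk_p out_p] := pos_shifted p (erefl : 0%R = (1%:Z - 1)%R) isT; rewrite shifted0 in blk_p out_p.
by case: (boolP (in_block p)) => [/blk_p | /out_p]; lia.
Qed.

Lemma posb0 : posb 0 = 1.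
Proof. by rewrite wat_block // pos_vtx //; have := k_succ_lt_n; lia. Qed.

Lemma posb_step q : q.+1 < L -> posb q < posb q.+1.
Proof.
have [q0 sorted_w] := semi_valid_sorted w_sv.
pose y u := val (wat w (2 * (q0 + u) + 1)).
have [||||c y_incr] := @cw_cyclic_sorted n L y (origin %% n).
- by rewrite ltn_pmod // n_gt0.
- by move=> u; rewrite /y addnA wat_odd_period.
- by move=> u; apply: ltn_ord.
- exact: sorted_w.
pose E t := pos (wat w (2 * (q0 + (c + t)) + 1)).
have E_step t : t.+1 < L -> E t < E t.+1 by move=> tL; rewrite /E !pos_cw; exact: (y_incr t tL).
have [t0 t0L it0] := @exists_step2 l (2 * (q0 + c) + 1) i.
have posbE q' : posb q' = E (t0 + q').
  by rewrite /E; congr pos; apply: wat_modL; rewrite -modnDml it0 modnDml; congr modn; lia.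
have t0_0 : t0 = 0.
  case: (posnP t0) => // t0_gt0; have := ltn_chain E_step t0_gt0 t0L.
  have := posbE 0; rewrite posb0 addn0 => <-.
  by have := pos_ge1 (2 * (q0 + (c + 0)) + 1); rewrite /E; lia.
by move=> qL; rewrite !posbE t0_0 !add0n; apply: E_step.
Qed.

Lemma opp_step2 p : exists q, [/\ q < L, p %% L = (i + 2 * q) %% L &
  (p + l.*2) %% L = (i + 2 * (if q <= l then q + l else q - l.+1)) %% L].
Proof.
have [q qL pq] := @exists_step2 l i p.
exists q; split => //; rewrite -modnDml pq modnDml.
case: ifP => ql; first by congr modn; lia.
have -> : i + 2 * q + l.*2 = 2 * L + (i + 2 * (q - l.+1)) by lia.
by rewrite modnMDl.
Qed.

Lemma out_block_far : ~~ in_block (i + 2 * l.+1).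
Proof.
apply/negP => /in_block_opp; rewrite (@in_block_modL (i + 2 * l.+1 + l.*2) i) ?in_block_i //.
have -> : i + 2 * l.+1 + l.*2 = 2 * L + i by lia.
by rewrite modnMDl.
Qed.

Lemma out_block_near : ~~ in_block (i + 2 * l).
Proof. by have := in_block_opp in_block_i; rewrite -mul2n. Qed.

Lemma posb_lt q q' : q < q' -> q' < L -> posb q < posb q'.
Proof. exact: (ltn_chain (f := fun q => posb q) posb_step). Qed.

Lemma posb_le q q' : q <= q' -> q' < L -> posb q <= posb q'.
Proof. exact: (leq_chain (f := fun q => posb q) posb_step). Qed.

Lemma closed_int_cover3 p : [|| vtx 0 \in closed_int (wat w p) (wat w (p + l.*2)),
  vtx 1 \in closed_int (wat w p) (wat w (p + l.*2))
  | wat w (i + 2 * l.+1) \in closed_int (wat w p) (wat w (p + l.*2))].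
Proof.
have [q [qL pq opq]] := opp_step2 p; rewrite (wat_modL w pq) (wat_modL w opq) {pq opq}.
rewrite !in_closed_int !cdist_pos !pos_vtx ?n_gt1 ?(ltnW n_gt1) //.
apply: cw_le_cover3; rewrite ?pos_lt //.
case: (leqP q l) => ql /=.
  case: (posnP q) => [-> | q_gt0]; first by rewrite posb0 eqxx.
  have := @posb_le q l.+1 (ltac:(lia)) (ltac:(lia)).
  have := @posb_le l.+1 (q + l) (ltac:(lia)) (ltac:(lia)).
  lia.
have := @posb_lt (q - l.+1) q (ltac:(lia)) (ltac:(lia)).
lia.
Qed.

Lemma closed_int_cover2 p : (vtx 1 \in closed_int (wat w p) (wat w (p + l.*2)))
  || (wat w (i + 2 * l) \in closed_int (wat w p) (wat w (p + l.*2))).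
Proof.
have [q [qL pq opq]] := opp_step2 p; rewrite (wat_modL w pq) (wat_modL w opq) {pq opq}.
rewrite !in_closed_int !cdist_pos !pos_vtx ?n_gt1 //.
apply: cw_le_cover2; rewrite ?pos_lt ?pos_ge1 //.
case: (leqP q l) => ql /=.
  have := @posb_le q l (ltac:(lia)) (ltac:(lia)).
  have := @posb_le l (q + l) (ltac:(lia)) (ltac:(lia)).
  lia.
have := @posb_lt (q - l.+1) q (ltac:(lia)) (ltac:(lia)).
have := @posb_lt 0 q (ltac:(lia)) (ltac:(lia)).
rewrite posb0; lia.
Qed.

Lemma witness_origin r : 3 <= r ->
  r <= #|[set x | (posb l < pos x) || (pos x <= 1)]| ->
  exists2 W, W \in H r w :\: H r (shifted 1%R) & vtx 0 \in W.
Proof.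
move=> r3; set K := [set x | _] => rK.
have a_gt1 : 1 < posb l by rewrite -[X in X < _]posb0; apply: posb_lt; lia.
have a_lt_b : posb l < posb l.+1 by apply: posb_step; lia.
set T := [set vtx 0; vtx 1; wat w (i + 2 * l.+1)].
have TK : T \subset K.
  by apply/subsetP => x; rewrite !inE -!orbA => /or3P [] /eqP ->; rewrite ?pos_vtx ?n_gt1 ?n_gt0; lia.
have [W [TW WK /eqP Wr]] := exists_set_between TK (leq_trans (cards3_le _ _ _) r3) rK.
exists W; last by apply: (subsetP TW); rewrite !inE eqxx.
rewrite in_setD; apply/andP; split.
  apply/negP => /(mem_H_arc i) [x xW].
  have -> : i + l.*2 = i + 2 * l by rewrite mul2n.
  have := @wat_shifted_block 1%R 2 0 erefl isT k_ge1; rewrite muln0 addn0 add0n => ->.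
  rewrite wat_shifted_out ?out_block_near //.
  rewrite in_closed_int !cdist_pos pos_vtx; last by have := k_succ_lt_n; lia.
  have := pos_lt (wat w (i + 2 * l)); have := subsetP WK x xW; rewrite inE /cw.
  by repeat case: ifP; lia.
rewrite inE Wr /=; apply/forallP => p; apply/set0Pn.
case/or3P: (closed_int_cover3 p) => x_arc;
  [exists (vtx 0) | exists (vtx 1) | exists (wat w (i + 2 * l.+1))];
  by rewrite inE x_arc andbT; apply: (subsetP TW); rewrite !inE eqxx ?orbT.
Qed.

Lemma witness_top r : 3 <= r ->
  r <= #|[set x | (1 <= pos x) && (pos x < posb l.+1)]| ->
  exists2 W, W \in H r w :\: H r (shifted (-1)%R) & vtx k.+1 \in W.
Proof.
move=> r3; set K := [set x | _] => rK.
have b_gt : k.+1 < posb l.+1 by apply: pos_out_block; exact: out_block_far.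
have a_lt_b : posb l < posb l.+1 by apply: posb_step; lia.
have kn := k_succ_lt_n.
set T := [set vtx k.+1; vtx 1; wat w (i + 2 * l)].
have TK : T \subset K.
  apply/subsetP => x; rewrite !inE -!orbA => /or3P [] /eqP ->; rewrite ?pos_vtx ?n_gt1 //;
  by have := pos_ge1 (i + 2 * l); lia.
have [W [TW WK /eqP Wr]] := exists_set_between TK (leq_trans (cards3_le _ _ _) r3) rK.
exists W; last by apply: (subsetP TW); rewrite !inE eqxx.
rewrite in_setD; apply/andP; split.
  apply/negP => /(mem_H_arc (i + 2 * l.+1)) [x xW].
  rewrite (@wat_modL _ _ _ (i + 2 * l.+1 + l.*2) (i + 2 * 0)); last first.
    rewrite muln0 addn0; have -> : i + 2 * l.+1 + l.*2 = 2 * L + i by lia.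
    by rewrite modnMDl.
  rewrite (@wat_shifted_block (-1)%R 0 0) // wat_shifted_out ?out_block_far //.
  rewrite in_closed_int !cdist_pos pos_vtx ?n_gt0 //.
  have := pos_lt (wat w (i + 2 * l.+1)); have := subsetP WK x xW; rewrite inE /cw.
  by repeat case: ifP; lia.
rewrite inE Wr /=; apply/forallP => p; apply/set0Pn.
case/orP: (closed_int_cover2 p) => x_arc; [exists (vtx 1) | exists (wat w (i + 2 * l))];
  by rewrite inE x_arc andbT; apply: (subsetP TW); rewrite !inE eqxx ?orbT.
Qed.

Lemma strict_witness r : 3 <= r -> 2 * r <= n + 2 ->
  (exists2 W, W \in H r w :\: H r (shifted 1%R) & vtx 0 \in W) \/
  (exists2 W, W \in H r w :\: H r (shifted (-1)%R) & vtx k.+1 \in W).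
Proof.
move=> r3 rn.
set K1 := [set x | (posb l < pos x) || (pos x <= 1)].
set K2 := [set x | (1 <= pos x) && (pos x < posb l.+1)].
have a_lt_b : posb l < posb l.+1 by apply: posb_step; lia.
have K12 : K1 :|: K2 = setT by apply/setP => x; rewrite !inE; have := pos_lt x; lia.
have v1_K12 : vtx 1 \in K1 :&: K2.
  by rewrite !inE pos_vtx ?n_gt1 //; have := pos_ge1 (i + 2 * l); lia.
have : n.+1 <= #|K1| + #|K2|.
  rewrite -cardsUI K12 cardsT card_ord.
  have : 0 < #|K1 :&: K2| by apply/card_gt0P; exists (vtx 1).
  lia.
case: (leqP r #|K1|) => rK1 K_big; first by left; apply: witness_origin.
have rK2 : r <= #|K2| by lia.
by right; apply: witness_top.
Qed.
End Shift.

Theorem proposition3p7 (n r l : nat) (w : 'I_(l.*2.+1) -> 'I_n) (i k j : nat) :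
  2 <= r -> 1 <= l -> 1 <= k <= l ->
  semi_valid w ->
  consecutive_at w i k j ->
  semi_valid (shiftC w i k j (-1)%R) ->
  semi_valid (shiftC w i k j 0%R) ->
  semi_valid (shiftC w i k j 1%R) ->
  minn #|H r (shiftC w i k j (-1)%R)| #|H r (shiftC w i k j 1%R)| <= #|H r w|
  /\ (3 <= r -> 3 * r - 5 <= n ->
      minn #|H r (shiftC w i k j (-1)%R)| #|H r (shiftC w i k j 1%R)| < #|H r w|).
Proof.
(* C_{i,k,0} is C itself. *)
move=> r2 l1 /andP [k1 kl] w_sv w_cons m1_sv _ p1_sv.
have [le_m1 lt_m1] := card_setD_m1 k1 kl w_cons w_sv m1_sv p1_sv r.
have [le_p1 lt_p1] := card_setD_p1 k1 kl w_cons w_sv m1_sv p1_sv r.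
split; first exact: minn_card_leq (leq_add le_m1 le_p1).
move=> r3 rn; have rn' : 2 * r <= n + 2 by lia.
apply: minn_card_ltn.
by case: (strict_witness k1 kl w_cons w_sv m1_sv p1_sv r3 rn') => [/lt_m1 | /lt_p1]; lia.
Qed.
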